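(* Let $\beta,\lambda>0$, let $K_-\le K_+$ be integers, and let $f(x)=\sum_{k=K_-}^{K_+}c_ke^{-\lambda(x-\beta k)^2}$ with $c_k\in\mathbb C$, $c_{K_-}\neq0$, $c_{K_+}\neq0$. Let $\Gamma\subset\mathbb R$ be a set of $2(K_+-K_-)+1$ distinct points. Then $f$ is determined, up to a unimodular constant and conjugation, by the phaseless samples $|f(\gamma)|$ and $|f'(\gamma)|$, $\gamma\in\Gamma$: that is, if $g(x)=\sum_{k=K_-}^{K_+}d_ke^{-\lambda(x-\beta k)^2}$ with $d_k\in\mathbb C$ satisfies $|g(\gamma)|=|f(\gamma)|$ and $|g'(\gamma)|=|f'(\gamma)|$ for all $\gamma\in\Gamma$, then there is $z\in\mathbb C$, $|z|=1$, with $g=zf$ or $g=z\overline f$.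
   Context: Here $K_-=\min\{k: c_k\neq0\}$ and $K_+=\max\{k:c_k\neq0\}$, i.e. $f$ is a function of finite duration in the Gaussian shift-invariant space $\{\sum_{k\in\mathbb Z}c_ke^{-\lambda(\cdot-\beta k)^2}: \{c_k\}\in\ell^\infty(\mathbb Z)\}$. *)

From Stdlib Require Import Reals ZArith List.
From Coquelicot Require Import Coquelicot.
Open Scope R_scope.

Definition gauss (lam beta : R) (k : Z) (x : R) : R :=
  exp (- lam * (x - beta * IZR k) ^ 2).

Definition gauss_sum (lam beta : R) (Km Kp : Z) (c : Z -> C) (x : R) : C :=
  fold_right (fun (n : nat) (acc : C) =>
                Cplus (Cmult (c (Km + Z.of_nat n)%Z)
                             (RtoC (gauss lam beta (Km + Z.of_nat n)%Z x))) acc)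
             (RtoC 0) (seq 0 (S (Z.to_nat (Kp - Km)))).

From Stdlib Require Import Reals ZArith List Lra Lia.
From Coquelicot Require Import Coquelicot.
From mathcomp Require all_boot all_algebra complex Rstruct ring.
Open Scope R_scope.

(* With t = exp (2 lam beta x) one has f(x) = E(x) P(t) and f'(x) = E(x) (a(x) P(t) + b t P'(t)),
   where E > 0, a(x) is real, b = 2 lam beta, and P is the polynomial of degree K+ - K- with
   coefficients c_k exp (-lam (beta k)^2); likewise g(x) = E(x) Q(t).  As t is real and injective
   in x, the 2(K+ - K-) + 1 samples of |f| determine the polynomial P P^* (P^* has the conjugate
   coefficients), so P P^* = Q Q^*; the samples of |f'| then determine |P'(t)|, so that also
   P' P'^* = Q' Q'^*.  Writing P = h p, Q = h q with h = gcd (P, Q), coprimality turns p p^* = q q^*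
   into q = u p^*, and P' P'^* - Q' Q'^* factors as the product of the Wronskian of h and h^* with
   the Wronskian of p^* and p.  One of them vanishes, so h^* is a multiple of h or p^* is a multiple
   of p, which gives Q = w P^* or Q = w P. *)

Definition gauss_env (lam beta : R) (Km : Z) (x : R) : R :=
  exp (- lam * x ^ 2 + 2 * lam * beta * IZR Km * x).

Definition gauss_weight (lam beta : R) (k : Z) : R := exp (- lam * (beta * IZR k) ^ 2).

Definition gauss_var (lam beta x : R) : R := exp (2 * lam * beta * x).

Definition gauss_drift (lam beta : R) (Km : Z) (x : R) : R := 2 * lam * (beta * IZR Km - x).

Definition gauss_rate (lam beta : R) : R := 2 * lam * beta.

Lemma exp_mul_INR (n : nat) (y : R) : exp (INR n * y) = exp y ^ n.
Proof.
induction n as [|n IH].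
- simpl. rewrite Rmult_0_l, exp_0. reflexivity.
- rewrite S_INR, Rmult_plus_distr_r, Rmult_1_l, exp_plus, IH. simpl. ring.
Qed.

Lemma gauss_factor lam beta Km n x :
  gauss lam beta (Km + Z.of_nat n) x =
  gauss_env lam beta Km x * gauss_weight lam beta (Km + Z.of_nat n) * gauss_var lam beta x ^ n.
Proof.
unfold gauss, gauss_env, gauss_weight, gauss_var.
rewrite <- exp_mul_INR, <- !exp_plus. f_equal.
rewrite plus_IZR, <- INR_IZR_INZ. ring.
Qed.

Lemma is_derive_gauss lam beta k x :
  is_derive (gauss lam beta k) x (- 2 * lam * (x - beta * IZR k) * gauss lam beta k x).
Proof.
unfold gauss. auto_derive; [exact I|].
replace ((x - beta * IZR k) ^ 2) with ((x + - (beta * IZR k)) * ((x + - (beta * IZR k)) * 1))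
  by ring.
ring.
Qed.

Lemma is_derive_gauss_factor lam beta Km n x :
  is_derive (gauss lam beta (Km + Z.of_nat n)) x
    (gauss_env lam beta Km x * gauss_weight lam beta (Km + Z.of_nat n) * gauss_var lam beta x ^ n
     * (gauss_drift lam beta Km x + gauss_rate lam beta * INR n)).
Proof.
match goal with |- is_derive _ _ ?l =>
  replace l with
    (- 2 * lam * (x - beta * IZR (Km + Z.of_nat n)) * gauss lam beta (Km + Z.of_nat n) x)
end.
- apply is_derive_gauss.
- unfold gauss_drift, gauss_rate. rewrite gauss_factor, plus_IZR, <- INR_IZR_INZ. ring.
Qed.

Lemma gauss_rate_gt0 lam beta : 0 < lam -> 0 < beta -> 0 < gauss_rate lam beta.
Proof. intros. unfold gauss_rate. apply Rmult_lt_0_compat; lra. Qed.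

Lemma gauss_var_inj lam beta : 0 < lam -> 0 < beta ->
  forall x y, gauss_var lam beta x = gauss_var lam beta y -> x = y.
Proof.
intros lam_gt0 beta_gt0 x y h. apply exp_inv in h.
pose proof (gauss_rate_gt0 lam beta lam_gt0 beta_gt0). unfold gauss_rate in *.
apply (Rmult_eq_reg_l (2 * lam * beta)); lra.
Qed.

Lemma is_derive_C_unique (f : R -> C) x l1 l2 :
  is_derive f x l1 -> is_derive f x l2 -> l1 = l2.
Proof.
intros df1 df2.
assert (dfst : forall l, is_derive f x l -> is_derive (fun y => fst (f y)) x (fst l))
  by (intros l df; exact (filterdiff_comp' f fst x _ _ df (filterdiff_linear _ is_linear_fst))).
assert (dsnd : forall l, is_derive f x l -> is_derive (fun y => snd (f y)) x (snd l))
  by (intros l df; exact (filterdiff_comp' f snd x _ _ df (filterdiff_linear _ is_linear_snd))).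
pose proof (is_derive_unique _ _ _ (dfst _ df1)).
pose proof (is_derive_unique _ _ _ (dfst _ df2)).
pose proof (is_derive_unique _ _ _ (dsnd _ df1)).
pose proof (is_derive_unique _ _ _ (dsnd _ df2)).
destruct l1 as [a1 b1], l2 as [a2 b2]. simpl in *. congruence.
Qed.

Lemma is_derive_fold_Csum (l : list nat) (a : nat -> C) (g : nat -> R -> R) (dg : nat -> R) x :
  (forall n, is_derive (g n) x (dg n)) ->
  is_derive (fun y => fold_right (fun n acc => Cplus (Cmult (a n) (RtoC (g n y))) acc) (RtoC 0) l) x
    (fold_right (fun n acc => Cplus (Cmult (a n) (RtoC (dg n))) acc) (RtoC 0) l).
Proof.
intros dg_spec.
assert (scal_RtoC : forall (z : C) (r : R), Cmult z (RtoC r) = scal r z).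
{ intros [z1 z2] r. unfold Cmult, RtoC, scal. simpl.
  unfold prod_scal, scal. simpl. unfold mult. simpl. f_equal; ring. }
induction l as [|n l IH]; simpl.
- exact (is_derive_const (V := C_R_NormedModule) (RtoC 0) x).
- apply (is_derive_plus (V := C_R_NormedModule)); [|exact IH].
  rewrite scal_RtoC.
  apply (is_derive_ext (K := R_AbsRing) (V := C_R_NormedModule) (fun y => scal (g n y) (a n))).
  + intros y. rewrite scal_RtoC. reflexivity.
  + apply (is_derive_scal_l (K := R_AbsRing) (V := C_R_NormedModule)), dg_spec.
Qed.

Module PolyPhaseRetrieval.
Import all_boot all_algebra ring.
Import GRing.Theory Num.Theory.
Local Set Implicit Arguments.
Local Unset Strict Implicit.
Local Open Scope ring_scope.

Section CharacteristicZero.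
Variable F : numFieldType.
Implicit Types p q : {poly F}.

Lemma deriv_eq0_polyC p : p^`() = 0 -> p = (p`_0)%:P.
Proof.
move=> p'0; apply: size1_polyC; rewrite leqNgt; apply/negP => sp_gt1.
have nz_p : p != 0 by rewrite -size_poly_gt0 (ltn_trans _ sp_gt1).
have := congr1 (fun q : {poly F} => q`_(size p).-2) p'0.
rewrite coef_deriv coef0.
have -> : (size p).-2.+1 = (size p).-1 by case: (size p) sp_gt1 => [|[|m]].
move/eqP; rewrite mulrn_eq0 -lead_coefE lead_coef_eq0 (negbTE nz_p) orbF.
by case: (size p) sp_gt1 => [|[|m]].
Qed.

Lemma dvdp_deriv_polyC p : p %| p^`() -> p = (p`_0)%:P.
Proof.
move=> dvd_p'; apply: deriv_eq0_polyC; have [->|nz_p] := eqVneq p 0; first exact: deriv0.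
apply/eqP; apply: contraTT (lt_size_deriv nz_p) => nz_p'.
by rewrite -leqNgt dvdp_leq.
Qed.

(* After removing gcdp p q, each cofactor divides its own derivative, hence is constant. *)
Lemma wronskian_eq0_scale p q : p != 0 -> p^`() * q = p * q^`() ->
  exists c, q = c *: p.
Proof.
move=> nz_p W0.
set g := gcdp p q; have nz_g : g != 0 by rewrite gcdp_eq0 negb_and nz_p.
set p1 := p %/ g; set q1 := q %/ g.
have ep : p = p1 * g by rewrite divpK // dvdp_gcdl.
have eq : q = q1 * g by rewrite divpK // dvdp_gcdr.
have cop : coprimep p1 q1 by apply: coprimep_div_gcd; rewrite nz_p.
have W1 : p1^`() * q1 = p1 * q1^`().
  have : g * g * (p1^`() * q1 - p1 * q1^`()) = 0.
    by rewrite -(subrr (p^`() * q)) {2}W0 ep eq !derivM; ring.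
  by move/eqP; rewrite !mulf_eq0 (negbTE nz_g) subr_eq0 => /eqP.
have cp1 : p1 = (p1`_0)%:P.
  by apply: dvdp_deriv_polyC; rewrite -(Gauss_dvdpl _ cop) W1 dvdp_mulIl.
have cq1 : q1 = (q1`_0)%:P.
  apply: dvdp_deriv_polyC.
  rewrite -(Gauss_dvdpl _ (_ : coprimep q1 p1)); last by rewrite coprimep_sym.
  by rewrite mulrC -W1 mulrC dvdp_mulIl.
have nz_p10 : p1`_0 != 0 by apply: contraNneq nz_p => p10; rewrite ep cp1 p10 mul0r.
exists (q1`_0 / p1`_0).
by rewrite eq ep cq1 cp1 -mul_polyC mulrA -polyCM !coefC /= divfK.
Qed.

End CharacteristicZero.

Section HermitianSquares.
Variable F : numClosedFieldType.
Implicit Types (p q : {poly F}) (x : F).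
Local Notation pconj := (map_poly (@Num.conj F)).

Lemma pconjK : involutive pconj.
Proof. by apply: map_polyK; [exact: conjCK | rewrite conjC0]. Qed.

Lemma horner_pconj p x : x \is Num.real -> (pconj p).[x] = p.[x]^*.
Proof. by move=> /CrealP {1}<-; rewrite horner_map. Qed.

Lemma horner_hermitian p x : x \is Num.real -> (p * pconj p).[x] = `|p.[x]| ^+ 2.
Proof. by move=> xR; rewrite hornerM horner_pconj // normCK. Qed.

Lemma size_hermitian p n : (size p <= n.+1)%N -> (size (p * pconj p)%R <= n.*2.+1)%N.
Proof.
move=> sp; apply: leq_trans (size_polyMleq _ _) _; rewrite size_map_poly.
by case: (size p) sp => // m sm; rewrite addnS /= addSn -addnn ltnS leq_add.
Qed.

Lemma hermitian_coprime_scale p q : coprimep p q -> p * pconj p = q * pconj q ->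
  exists u, q = u *: pconj p.
Proof.
move=> cop hpq.
have q_dvd : q %| pconj p.
  rewrite -(Gauss_dvdpl _ (_ : coprimep q p)); last by rewrite coprimep_sym.
  by rewrite mulrC hpq dvdp_mulIl.
have dvd_q : pconj p %| q.
  rewrite -(dvdp_map (@Num.conj F)) pconjK -(Gauss_dvdpl _ cop) mulrC -hpq.
  exact: dvdp_mulIl.
have /eqpP [[c1 c2] /= /andP [nz_c1 _] e12] : q %= pconj p by rewrite /eqp q_dvd.
by exists (c2 / c1); rewrite mulrC -scalerA -e12 scalerA mulVf // scale1r.
Qed.

Lemma hermitian_scale_unimodular p q w : p != 0 -> p * pconj p = q * pconj q ->
  q = w *: p \/ q = w *: pconj p -> `|w| = 1.
Proof.
move=> nz_p hpq hq.
have nz_pp : p * pconj p != 0 by rewrite mulf_neq0 // map_poly_eq0.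
have : (`|w| ^+ 2 - 1) *: (p * pconj p) = 0.
  apply/eqP; rewrite normCK scalerBl scale1r subr_eq0 {2}hpq.
  by case: hq => ->; rewrite map_polyZ ?pconjK -scalerAl -scalerAr scalerA
    ?(mulrC (pconj p)).
move/eqP; rewrite scaler_eq0 (negbTE nz_pp) orbF subr_eq0 sqrp_eq1 //.
by move/eqP.
Qed.

Lemma deriv_hermitian_sub p q u : u * u^* = 1 ->
  (p * q)^`() * pconj (p * q)^`() - (u *: (p * pconj q))^`() * pconj (u *: (p * pconj q))^`() =
  (p^`() * pconj p - p * pconj p^`()) * (q * pconj q^`() - q^`() * pconj q).
Proof.
move=> uu1; rewrite derivZ map_polyZ -scalerAl -scalerAr scalerA uu1 scale1r.
by rewrite !derivM !deriv_map !rmorphD !rmorphM /= !pconjK; ring.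
Qed.

Lemma poly_phase_retrieval p q : p != 0 -> p * pconj p = q * pconj q ->
  p^`() * pconj p^`() = q^`() * pconj q^`() ->
  exists2 w, `|w| = 1 & q = w *: p \/ q = w *: pconj p.
Proof.
move=> nz_p hpq hpq'.
suff [w hw] : exists w, q = w *: p \/ q = w *: pconj p.
  by exists w; first exact: hermitian_scale_unimodular hw.
set g := gcdp p q; set p1 := p %/ g; set q1 := q %/ g.
have nz_g : g != 0 by rewrite gcdp_eq0 negb_and nz_p.
have ep : p = g * p1 by rewrite mulrC divpK // dvdp_gcdl.
have eq : q = g * q1 by rewrite mulrC divpK // dvdp_gcdr.
have nz_p1 : p1 != 0 by apply: contraNneq nz_p => p10; rewrite ep p10 mulr0.
have hpq1 : p1 * pconj p1 = q1 * pconj q1.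
  apply: (mulfI (_ : g * pconj g != 0)); first by rewrite mulf_neq0 // map_poly_eq0.
  by rewrite -[LHS]mulrACA -[RHS]mulrACA -!rmorphM -ep -eq.
have [u eq1] : exists u, q1 = u *: pconj p1.
  by apply: hermitian_coprime_scale hpq1; apply: coprimep_div_gcd; rewrite nz_p.
have uu1 : u * u^* = 1.
  by rewrite -normCK (hermitian_scale_unimodular nz_p1 hpq1 (or_intror eq1)) expr1n.
have equ : q = u *: (g * pconj p1) by rewrite eq eq1 scalerAr.
have := deriv_hermitian_sub g p1 uu1; rewrite -ep -equ hpq' subrr => /esym/eqP.
rewrite mulf_eq0 !subr_eq0 => /orP [] /eqP W0.
  have [c ec] : exists c, pconj g = c *: g.
    by apply: wronskian_eq0_scale; rewrite // deriv_map.
  have nz_c : c != 0.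
    by apply: contraNneq nz_g => c0; move/eqP: ec; rewrite c0 scale0r map_poly_eq0.
  by exists (u / c); right; rewrite equ ep rmorphM /= ec -scalerAl scalerA divfK.
have [c ec] : exists c, pconj p1 = c *: p1.
  by apply: wronskian_eq0_scale; rewrite // deriv_map.
by exists (u * c); left; rewrite equ ec -scalerAr scalerA -ep.
Qed.

Lemma hermitian_eq_of_samples p q n (rs : seq F) :
  (size p <= n.+1)%N -> (size q <= n.+1)%N -> uniq rs -> (n.*2 < size rs)%N ->
  {subset rs <= Num.real} -> {in rs, forall r, `|p.[r]| = `|q.[r]|} ->
  p * pconj p = q * pconj q.
Proof.
move=> sp sq uniq_rs size_rs rs_real hpq; apply/eqP; rewrite -subr_eq0; apply/eqP.
apply: (roots_geq_poly_eq0 _ uniq_rs).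
  apply/allP => r rs_r; rewrite rootE hornerD hornerN.
  by rewrite !horner_hermitian ?rs_real // hpq // subrr.
apply: leq_trans (size_polyD _ _) _; rewrite size_polyN geq_max.
by rewrite !(leq_trans (size_hermitian _) size_rs).
Qed.

Lemma sqr_norm_affine_deriv p a b r :
  a \is Num.real -> b \is Num.real -> r \is Num.real ->
  `|a * p.[r] + b * r * p^`().[r]| ^+ 2 =
  a ^+ 2 * (p * pconj p).[r] + a * b * r * (p * pconj p)^`().[r]
  + (b * r) ^+ 2 * `|p^`().[r]| ^+ 2.
Proof.
move=> aR bR rR; rewrite derivM deriv_map hornerD !hornerM !horner_pconj // !normCK.
by rewrite rmorphD !rmorphM /= (conj_Creal aR) (conj_Creal bR) (conj_Creal rR); ring.
Qed.

Lemma norm_deriv_eq_of_sample p q a b r :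
  a \is Num.real -> b \is Num.real -> b != 0 -> r \is Num.real -> r != 0 ->
  p * pconj p = q * pconj q ->
  `|a * p.[r] + b * r * p^`().[r]| = `|a * q.[r] + b * r * q^`().[r]| ->
  `|p^`().[r]| = `|q^`().[r]|.
Proof.
move=> aR bR nz_b rR nz_r hpq /(congr1 (fun x => x ^+ 2)).
rewrite !sqr_norm_affine_deriv // hpq => /addrI /mulfI.
rewrite expf_neq0 ?mulf_neq0 // => /(_ isT) /eqP.
by rewrite eqrXn2 // => /eqP.
Qed.

Lemma poly_phase_retrieval_of_samples p q n b (rs : seq F) :
  p != 0 -> (size p <= n.+1)%N -> (size q <= n.+1)%N ->
  uniq rs -> (n.*2 < size rs)%N -> {subset rs <= Num.real} -> 0 \notin rs ->
  b \is Num.real -> b != 0 ->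
  {in rs, forall r, `|p.[r]| = `|q.[r]|} ->
  {in rs, forall r, exists2 a, a \is Num.real &
     `|a * p.[r] + b * r * p^`().[r]| = `|a * q.[r] + b * r * q^`().[r]|} ->
  exists2 w, `|w| = 1 & q = w *: p \/ q = w *: pconj p.
Proof.
move=> nz_p sp sq uniq_rs size_rs rs_real rs_nz0 bR nz_b hpq hpq'.
have ehpq := hermitian_eq_of_samples sp sq uniq_rs size_rs rs_real hpq.
apply: poly_phase_retrieval => //.
have size_deriv (s : {poly F}) : (size s <= n.+1)%N -> (size s^`() <= n.+1)%N.
  move=> ss; have [->|nz_s] := eqVneq s 0; first by rewrite deriv0 size_poly0.
  exact: leq_trans (ltnW (lt_size_deriv nz_s)) ss.
apply: (hermitian_eq_of_samples (size_deriv _ sp) (size_deriv _ sq) uniq_rs size_rs rs_real).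
move=> r rs_r; have [a aR] := hpq' r rs_r.
apply: norm_deriv_eq_of_sample aR bR nz_b (rs_real r rs_r) _ ehpq.
by apply: contraNneq rs_nz0 => <-.
Qed.

End HermitianSquares.
End PolyPhaseRetrieval.

Module GaussPoly.
Import all_boot all_algebra complex Rstruct ring.
Import GRing.Theory Num.Theory PolyPhaseRetrieval.
Local Set Implicit Arguments.
Local Unset Strict Implicit.

Lemma InP (T : eqType) (x : T) (s : seq T) : reflect (In x s) (x \in s).
Proof.
elim: s => [|y s IH] /=; first by right.
rewrite inE; apply: (iffP orP) => [[/eqP ->|/IH]|[->|/IH]]; by [left | right | rewrite eqxx; left].
Qed.

Lemma NoDup_uniq (T : eqType) (s : seq T) : NoDup s -> uniq s.
Proof.
elim: s => //= x s IH /NoDup_cons_iff [x_notin /IH ->]; rewrite andbT.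
by apply/negP => /InP.
Qed.

Lemma size_length (T : Type) (s : seq T) : size s = length s.
Proof. by elim: s => //= x s ->. Qed.

Lemma seq_iota m n : List.seq m n = iota m n.
Proof. by elim: n m => //= n IH m; rewrite IH. Qed.

Lemma deriv_poly_mulX (S : nzRingType) n (a : nat -> S) :
  ((\poly_(k < n.+1) a k)^`() * 'X = \poly_(k < n.+1) (k%:R * a k))%R.
Proof.
apply/polyP => k; rewrite coefMX.
case: k => [|k] /=; first by rewrite coef_poly mul0r.
rewrite coef_deriv !coef_poly.
by case: ifP => _; [rewrite mulr_natl | rewrite mul0rn].
Qed.

Section GaussianPolynomial.
Variables (lam beta : R) (Km Kp : Z).
Hypotheses (lam_gt0 : 0 < lam) (beta_gt0 : 0 < beta).

Local Open Scope complex_scope.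
Local Open Scope ring_scope.

Definition Ri_of_C (z : C) : R[i] := Complex z.1 z.2.
Definition C_of_Ri (w : R[i]) : C := let: Complex a b := w in (a, b).

Lemma C_of_RiK : cancel C_of_Ri Ri_of_C. Proof. by case. Qed.
Lemma Ri_of_C_inj : injective Ri_of_C. Proof. by case=> ? ? [? ?] [-> ->]. Qed.
Lemma Ri_of_CD z w : Ri_of_C (Cplus z w) = Ri_of_C z + Ri_of_C w. Proof. by case: z; case: w. Qed.
Lemma Ri_of_CM z w : Ri_of_C (Cmult z w) = Ri_of_C z * Ri_of_C w. Proof. by case: z; case: w. Qed.
Lemma Ri_of_C_conj z : Ri_of_C (Cconj z) = (Ri_of_C z)^*. Proof. by case: z. Qed.

Lemma real_complex_real (r : R) : r%:C \is Num.real.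
Proof. by apply/complex_realP; exists r. Qed.

Lemma real_complex_neq0 (r : R) : Rlt 0 r -> r%:C != 0.
Proof. by move=> /RltP r_gt0; rewrite fmorph_eq0 lt0r_neq0. Qed.

Lemma norm_Ri_of_C z : `|Ri_of_C z| = (Cmod z)%:C.
Proof. by rewrite normc_def /Cmod RsqrtE !RpowE. Qed.

Lemma Ri_of_C_fold (l : seq nat) (a : nat -> C) (h : nat -> R) :
  Ri_of_C (fold_right (fun n acc => Cplus (Cmult (a n) (RtoC (h n))) acc) (RtoC 0) l) =
  \sum_(n <- l) Ri_of_C (a n) * (h n)%:C.
Proof. by elim: l => [|n l IH] /=; rewrite ?big_nil // big_cons Ri_of_CD Ri_of_CM IH. Qed.

Local Notation N := (Z.to_nat (Kp - Km)).
Local Notation t x := (gauss_var lam beta x)%:C.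
Local Notation E x := (gauss_env lam beta Km x)%:C.

Definition gauss_poly (c : Z -> C) : {poly R[i]} :=
  \poly_(k < N.+1)
    (Ri_of_C (c (Z.add Km (Z.of_nat k))) * (gauss_weight lam beta (Z.add Km (Z.of_nat k)))%:C).

Lemma gauss_poly_neq0 c : c Km <> RtoC 0 -> gauss_poly c != 0.
Proof.
move=> nz_c; apply/eqP => /(congr1 (fun p : {poly R[i]} => p`_0)).
rewrite coef0 coef_poly /= Z.add_0_r => /eqP; rewrite mulf_eq0 => /orP [/eqP c0|].
  by apply: nz_c; apply: Ri_of_C_inj.
by rewrite (negbTE (real_complex_neq0 (exp_pos _))).
Qed.

Lemma Ri_of_C_gauss_sum c x :
  Ri_of_C (gauss_sum lam beta Km Kp c x) = E x * (gauss_poly c).[t x].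
Proof.
rewrite /gauss_sum Ri_of_C_fold seq_iota horner_poly mulr_sumr.
rewrite -[iota 0 _]/(index_iota 0 N.+1) big_mkord; apply: eq_bigr => k _.
by rewrite gauss_factor RpowE !rmorphM rmorphXn /=; ring.
Qed.

Lemma Ri_of_C_gauss_sum_deriv c x l : is_derive (gauss_sum lam beta Km Kp c) x l ->
  Ri_of_C l = E x * ((gauss_drift lam beta Km x)%:C * (gauss_poly c).[t x]
                     + (gauss_rate lam beta)%:C * t x * (gauss_poly c)^`().[t x]).
Proof.
move=> /is_derive_C_unique df.
have := is_derive_fold_Csum (List.seq 0 N.+1) (fun n => c (Z.add Km (Z.of_nat n)))
  (fun n => gauss lam beta (Km + Z.of_nat n)) _ x (fun n => is_derive_gauss_factor lam beta Km n x).
move=> /df ->; rewrite Ri_of_C_fold seq_iota -[_ * t x * _]mulrA (mulrC (t x)).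
rewrite -hornerMX deriv_poly_mulX.
rewrite !horner_poly !mulr_sumr -big_split mulr_sumr.
rewrite -[iota 0 _]/(index_iota 0 N.+1) big_mkord; apply: eq_bigr => k _.
move: (gauss_drift _ _ _ _) (gauss_rate _ _) => a b.
by rewrite INRE RpowE !rmorphM rmorphD !rmorphM rmorphXn rmorph_nat /=; ring.
Qed.

Lemma norm_gauss_env_mulI x (u v : R[i]) : `|E x * u| = `|E x * v| -> `|u| = `|v|.
Proof.
rewrite !normrM => /mulfI; apply.
by rewrite normr_eq0 real_complex_neq0 //; apply: exp_pos.
Qed.

Lemma norm_gauss_poly_eq c d x :
  Cmod (gauss_sum lam beta Km Kp c x) = Cmod (gauss_sum lam beta Km Kp d x) ->
  `|(gauss_poly c).[t x]| = `|(gauss_poly d).[t x]|.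
Proof.
move=> /(congr1 (real_complex R)); rewrite -!norm_Ri_of_C !Ri_of_C_gauss_sum.
exact: norm_gauss_env_mulI.
Qed.

Lemma norm_gauss_poly_deriv_eq c d x fc fd :
  is_derive (gauss_sum lam beta Km Kp c) x fc -> is_derive (gauss_sum lam beta Km Kp d) x fd ->
  Cmod fc = Cmod fd ->
  `|(gauss_drift lam beta Km x)%:C * (gauss_poly c).[t x]
    + (gauss_rate lam beta)%:C * t x * (gauss_poly c)^`().[t x]| =
  `|(gauss_drift lam beta Km x)%:C * (gauss_poly d).[t x]
    + (gauss_rate lam beta)%:C * t x * (gauss_poly d)^`().[t x]|.
Proof.
move=> /Ri_of_C_gauss_sum_deriv efc /Ri_of_C_gauss_sum_deriv efd.
move=> /(congr1 (real_complex R)); rewrite -!norm_Ri_of_C efc efd.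
exact: norm_gauss_env_mulI.
Qed.

Lemma gauss_poly_phase_retrieval (c d : Z -> C) (Gamma : list R) (f' g' : R -> C) :
  c Km <> RtoC 0 -> NoDup Gamma -> (Nat.add N N < length Gamma)%coq_nat ->
  (forall x, is_derive (gauss_sum lam beta Km Kp c) x (f' x)) ->
  (forall x, is_derive (gauss_sum lam beta Km Kp d) x (g' x)) ->
  (forall gam, In gam Gamma ->
     Cmod (gauss_sum lam beta Km Kp d gam) = Cmod (gauss_sum lam beta Km Kp c gam) /\
     Cmod (g' gam) = Cmod (f' gam)) ->
  exists2 w, `|w| = 1 &
    gauss_poly d = w *: gauss_poly c \/ gauss_poly d = w *: map_poly Num.conj (gauss_poly c).
Proof.
move=> nz_c nodup size_Gamma df dg samples.
apply: (@poly_phase_retrieval_of_samples _ _ _ N (gauss_rate lam beta)%:C [seq t x | x <- Gamma]).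
- exact: gauss_poly_neq0.
- exact: size_poly.
- exact: size_poly.
- by rewrite map_inj_uniq ?NoDup_uniq // => x y /complexI; apply: gauss_var_inj.
- by rewrite size_map size_length -addnn; apply/ssrnat.ltP.
- by move=> _ /mapP [x _ ->]; apply: real_complex_real.
- by apply/mapP => [[x _ /esym/eqP]]; apply/negP/real_complex_neq0/exp_pos.
- exact: real_complex_real.
- exact/real_complex_neq0/gauss_rate_gt0.
- by move=> _ /mapP [x /InP /samples [hx _] ->]; apply: norm_gauss_poly_eq.
move=> _ /mapP [x /InP /samples [_ hx] ->]; exists (gauss_drift lam beta Km x)%:C.
  exact: real_complex_real.
exact: norm_gauss_poly_deriv_eq (df x) (dg x) (esym hx).
Qed.

Lemma Cmod_C_of_Ri w : `|w| = 1 -> Cmod (C_of_Ri w) = 1.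
Proof. by move=> w1; apply: complexI; rewrite -norm_Ri_of_C C_of_RiK w1. Qed.

Lemma gauss_sum_scale c d w : gauss_poly d = w *: gauss_poly c ->
  forall x, gauss_sum lam beta Km Kp d x = Cmult (C_of_Ri w) (gauss_sum lam beta Km Kp c x).
Proof.
move=> dcw x; apply: Ri_of_C_inj.
by rewrite Ri_of_CM C_of_RiK !Ri_of_C_gauss_sum dcw hornerZ mulrCA.
Qed.

Lemma gauss_sum_scale_conj c d w : gauss_poly d = w *: map_poly Num.conj (gauss_poly c) ->
  forall x, gauss_sum lam beta Km Kp d x = Cmult (C_of_Ri w) (Cconj (gauss_sum lam beta Km Kp c x)).
Proof.
move=> dcw x; apply: Ri_of_C_inj.
rewrite Ri_of_CM C_of_RiK Ri_of_C_conj !Ri_of_C_gauss_sum dcw hornerZ horner_pconj.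
  by rewrite rmorphM /= (conj_Creal (real_complex_real _)) mulrCA.
exact: real_complex_real.
Qed.

End GaussianPolynomial.
End GaussPoly.

Theorem theorem4p1 (beta lam : R) (Km Kp : Z) (c d : Z -> C) (Gamma : list R)
  (f' g' : R -> C) :
  0 < beta -> 0 < lam -> (Km <= Kp)%Z ->
  c Km <> RtoC 0 -> c Kp <> RtoC 0 ->
  NoDup Gamma -> length Gamma = Z.to_nat (2 * (Kp - Km) + 1) ->
  (forall x : R, is_derive (gauss_sum lam beta Km Kp c) x (f' x)) ->
  (forall x : R, is_derive (gauss_sum lam beta Km Kp d) x (g' x)) ->
  (forall gam : R, In gam Gamma ->
     Cmod (gauss_sum lam beta Km Kp d gam) = Cmod (gauss_sum lam beta Km Kp c gam) /\
     Cmod (g' gam) = Cmod (f' gam)) ->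
  exists z : C, Cmod z = 1 /\
    ((forall x : R, gauss_sum lam beta Km Kp d x = Cmult z (gauss_sum lam beta Km Kp c x)) \/
     (forall x : R, gauss_sum lam beta Km Kp d x = Cmult z (Cconj (gauss_sum lam beta Km Kp c x)))).
Proof.
intros beta_gt0 lam_gt0 Km_le_Kp c_Km _ nodup length_Gamma df dg samples.
assert (size_Gamma : (Z.to_nat (Kp - Km) + Z.to_nat (Kp - Km) < length Gamma)%nat)
  by (rewrite length_Gamma; lia).
destruct (GaussPoly.gauss_poly_phase_retrieval lam_gt0 beta_gt0 c_Km nodup size_Gamma df dg samples)
  as [w w1 dcw].
exists (GaussPoly.C_of_Ri w). split; [exact (GaussPoly.Cmod_C_of_Ri w1)|].
destruct dcw as [dcw | dcw]; [left | right].
- exact (GaussPoly.gauss_sum_scale dcw).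
- exact (GaussPoly.gauss_sum_scale_conj dcw).
Qed.
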